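(* If $f,g\in I$ are nonzero with $S(f)=S(g)$ and $LM(f)\neq LM(g)$, then there exist $a,b\in k^*$ such that $af+bg\neq0$ and $S(af+bg)<_{sign}S(f)$.
   Context: Let $k$ be a field with a valuation $val$, $A=k[X_1,\dots,X_n]$, $|f|$ the total degree. Fix $w\in val(k^* )^n$ and a monomial order $\le_1$. Tropical term order: for $a,b\in k^*$, $ax^\alpha<bx^\beta$ if $|x^\alpha|<|x^\beta|$, or equal degrees and $val(a)+w\cdot\alpha>val(b)+w\cdot\beta$, or equal degrees, equal such quantities and $x^\alpha<_1x^\beta$. $LM(f)$ is the monomial of the largest term of $f$. Let $f_1,\dots,f_s\in A$ ordered by increasing degree, $I=\langle f_1,\dots,f_s\rangle$, $(e_i)$ the canonical basis of $A^s$. Tame syzygy: $(a_1,\dots,a_s)\in A^s$ with $\sum a_jf_j=0$ and an $i$ with $a_i\neq0$, $a_j=0$ for $j>i$, $|a_jf_j|\le|a_if_i|$ for $j<i$; leading monomial $LM(a_i)e_i$; $LM(TSyz(F))$ is the submodule of $A^s$ generated by these. Fix a degree-refining monomial order $\le_m$. Total order $\le_{sign}$ on monomials of $A^s$: $x^\alpha e_i\le_{sign}x^\beta e_j$ if $i<j$; or $i=j$ and $|x^\alpha f_i|<|x^\beta f_i|$; or $i=j$, equal degrees, and either ($x^\alpha e_i\notin LM(TSyz(F))$, $x^\beta e_i\in LM(TSyz(F))$), or (both in and $x^\alpha\le_mx^\beta$), or (both not in and $x^\alpha\le_mx^\beta$). $I_{\le_{sign}x^\alpha e_i}=\mathrm{Span}_k\{x^\beta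 f_j:x^\beta e_j\le_{sign}x^\alpha e_i\}$; the signature $S(f)$ of nonzero $f\in I$ is the smallest $x^\alpha e_i$ with $f\in I_{\le_{sign}x^\alpha e_i}$. *)

From HB Require Import structures.
From mathcomp Require Import all_boot all_order all_algebra.
From mathcomp Require Import mpoly.
Set Implicit Arguments. Unset Strict Implicit. Unset Printing Implicit Defensive.
Import Order.TTheory GRing.Theory Num.Theory.
Local Open Scope ring_scope.

Definition is_valuation (K : fieldType) (R : realDomainType) (val : K -> R) : Prop :=
  (forall a b : K, a != 0 -> b != 0 -> val (a * b) = val a + val b) /\
  (forall a b : K, a != 0 -> b != 0 -> a + b != 0 ->
     Num.min (val a) (val b) <= val (a + b)).

Definition is_monomial_order (n : nat) (le : rel 'X_{1..n}) : Prop :=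
  (forall m, le m m) /\
  (forall m1 m2, le m1 m2 -> le m2 m1 -> m1 = m2) /\
  (forall m1 m2 m3, le m1 m2 -> le m2 m3 -> le m1 m3) /\
  (forall m1 m2, le m1 m2 || le m2 m1) /\
  (forall m, le 0%MM m) /\
  (forall m1 m2 m3, le m1 m2 -> le (m1 + m3)%MM (m2 + m3)%MM).

Definition degree_refining (n : nat) (le : rel 'X_{1..n}) : Prop :=
  forall m1 m2 : 'X_{1..n}, (mdeg m1 < mdeg m2)%N -> le m1 m2.

Section Tropical.
Variables (K : fieldType) (R : realDomainType) (val : K -> R) (n : nat)
          (w : 'I_n -> R) (le1 : rel 'X_{1..n}).

Definition wdot (m : 'X_{1..n}) : R := \sum_(i < n) w i * (m i)%:R.

Definition term_lt (a : K) (m1 : 'X_{1..n}) (b : K) (m2 : 'X_{1..n}) : bool :=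
  [|| (mdeg m1 < mdeg m2)%N,
      (mdeg m1 == mdeg m2) && (val b + wdot m2 < val a + wdot m1)
    | [&& mdeg m1 == mdeg m2, val a + wdot m1 == val b + wdot m2,
          le1 m1 m2 & m1 != m2]].

(* leading monomial: the monomial of the largest term of p
   (0%MM if p = 0, never used in that case) *)
Definition LM (p : {mpoly K[n]}) : 'X_{1..n} :=
  foldl (fun acc m => if term_lt p@_acc acc p@_m m then m else acc)
        (head 0%MM (msupp p)) (msupp p).

Variables (s : nat) (F : 'I_s -> {mpoly K[n]}) (lem : rel 'X_{1..n}).

(* elements of A^s are functions 'I_s -> A *)
Definition tame_syzygy (a : 'I_s -> {mpoly K[n]}) (i : 'I_s) : Prop :=
  [/\ \sum_(j < s) a j * F j = 0,
      a i != 0,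
      (forall j : 'I_s, (i < j)%N -> a j = 0) &
      (forall j : 'I_s, (j < i)%N -> (msize (a j * F j) <= msize (a i * F i))%N)].

Definition mono_e (m : 'X_{1..n}) (i : 'I_s) : 'I_s -> {mpoly K[n]} :=
  fun j => if j == i then 'X_[m] else 0.

(* membership in LM(TSyz(F)) : the submodule of A^s generated by the
   LM(a_i) e_i, a a tame syzygy with index i; elements are finite
   A-linear combinations of generators. *)
Definition in_LMTSyz (v : 'I_s -> {mpoly K[n]}) : Prop :=
  exists l : seq ({mpoly K[n]} * ('I_s * 'X_{1..n})),
    (forall t, t \in l -> exists a, tame_syzygy a t.2.1 /\ LM (a t.2.1) = t.2.2) /\
    (forall j : 'I_s, v j = \sum_(t <- l) t.1 * mono_e t.2.2 t.2.1 j).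

Definition sign_le (al : 'X_{1..n}) (i : 'I_s) (be : 'X_{1..n}) (j : 'I_s) : Prop :=
  (i < j)%N \/
  (i = j /\
   ((msize ('X_[al] * F i) < msize ('X_[be] * F i))%N \/
    (msize ('X_[al] * F i) = msize ('X_[be] * F i) /\
     ((~ in_LMTSyz (mono_e al i) /\ in_LMTSyz (mono_e be i)) \/
      (in_LMTSyz (mono_e al i) /\ in_LMTSyz (mono_e be i) /\ lem al be) \/
      (~ in_LMTSyz (mono_e al i) /\ ~ in_LMTSyz (mono_e be i) /\ lem al be))))).

Definition sign_lt (al : 'X_{1..n}) (i : 'I_s) (be : 'X_{1..n}) (j : 'I_s) : Prop :=
  sign_le al i be j /\ (al, i) <> (be, j).

Definition in_I_le (f : {mpoly K[n]}) (al : 'X_{1..n}) (i : 'I_s) : Prop :=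
  exists l : seq (K * ('X_{1..n} * 'I_s)),
    (forall t, t \in l -> sign_le t.2.1 t.2.2 al i) /\
    f = \sum_(t <- l) t.1 *: ('X_[t.2.1] * F t.2.2).

Definition is_signature (f : {mpoly K[n]}) (al : 'X_{1..n}) (i : 'I_s) : Prop :=
  in_I_le f al i /\ (forall be j, in_I_le f be j -> sign_le al i be j).

Definition in_ideal (f : {mpoly K[n]}) : Prop :=
  exists h : 'I_s -> {mpoly K[n]}, f = \sum_(j < s) h j * F j.

End Tropical.

(* Write f = c_f x^al f_i + f' and g = c_g x^al f_i + g', with f' and g' combinations of
   products x^be f_j whose index x^be e_j is <_sign-below x^al e_i.  Minimality of the
   signature forces c_f, c_g != 0, so h = c_g f - c_f g = c_g f' - c_f g' is again such a
   combination.  It is nonzero: scaling a polynomial by k shifts the valuation of every term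
   by val k, so LM(c_g f) = LM f != LM g = LM(c_f g).  As <=_sign is a total order in which
   every nonempty set has a least element, h has a signature, bounded by the largest index
   occurring in h, hence strictly below x^al e_i. *)

From HB Require Import structures.
From mathcomp Require Import all_boot all_order all_algebra.
From mathcomp Require Import mpoly boolp.
Set Implicit Arguments.
Unset Strict Implicit.
Unset Printing Implicit Defensive.
Import Order.TTheory GRing.Theory Num.Theory.
Local Open Scope ring_scope.

Lemma ex_min_key {T : Type} {P : T -> Prop} (key : T -> nat) :
  (exists x, P x) -> exists2 x, P x & forall y, P y -> (key x <= key y)%N.
Proof.
move=> [x Px].
have exk : exists k, `[< exists y, P y /\ key y = k >].
  by exists (key x); apply/asboolP; exists x.
case: (ex_minnP exk) => k /asboolP [y [Py <-]] key_min.
by exists y => // z Pz; apply: key_min; apply/asboolP; exists z.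
Qed.

Lemma seq_greatest (T : eqType) (r : T -> T -> Prop) (s : seq T) :
  (forall x y, r x y \/ r y x) -> (forall x y z, r x y -> r y z -> r x z) ->
  s != [::] -> exists2 m, m \in s & forall x, x \in s -> r x m.
Proof.
move=> r_total r_trans; have r_refl x : r x x by case: (r_total x x).
elim: s => // x [|y s] IH _.
  by exists x; rewrite ?mem_head // => z /[!inE] /eqP->.
have [m ms m_max] := IH isT.
have [rxm|rmx] := r_total x m.
  exists m; first by rewrite inE ms orbT.
  by move=> z; rewrite inE => /orP[/eqP->|/m_max].
exists x; rewrite ?mem_head // => z; rewrite inE => /orP[/eqP->//|/m_max rzm].
exact: r_trans rmx.
Qed.

Section FoldlArgmax.
Variables (T : eqType) (lt : rel T).
Hypotheses (lt_irr : irreflexive lt) (lt_trans : transitive lt)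
  (lt_total : forall x y, x != y -> lt x y || lt y x).

Lemma lt_split x y z : lt x y -> lt x z || lt z y.
Proof.
have [-> -> //|ne_zx lxy] := eqVneq z x; first by rewrite orbT.
by case/orP: (lt_total ne_zx) => [lzx|->]; rewrite ?(lt_trans lzx lxy) ?orbT.
Qed.

Lemma foldl_argmax x0 s :
  let r := foldl (fun a m => if lt a m then m else a) x0 s in
  r \in x0 :: s /\ {in x0 :: s, forall y, ~~ lt r y}.
Proof.
elim: s x0 => [|x s IH] x0 /=.
  by split=> [|y]; rewrite ?mem_head // inE => /eqP->; rewrite lt_irr.
set a := if lt x0 x then x else x0; have [r_in r_max] := IH a.
have a_in : a \in [:: x0, x & s] by rewrite /a; case: ifP; rewrite !inE eqxx ?orbT.
have a_max : {in [:: x0; x], forall y, ~~ lt a y}.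
  move=> y /[!inE] /orP[]/eqP->; rewrite /a;
    case: ifP => [lx0x|nlx0x]; rewrite ?lt_irr ?nlx0x //.
  by apply/negP => /(lt_trans lx0x); rewrite lt_irr.
split.
  by move: r_in; rewrite inE => /orP[/eqP->|rs] //; rewrite !inE rs !orbT.
move=> y; rewrite -cat1s -[x :: s]cat1s catA mem_cat => /orP[y_x0x|ys].
  apply/negP => /(lt_split a)/orP[]; first exact/negP/r_max/mem_head.
  exact/negP/a_max.
by apply: r_max; rewrite inE ys orbT.
Qed.

Lemma argmax_uniq (s : seq T) (r r' : T) : r \in s -> r' \in s ->
  {in s, forall y, ~~ lt r y} -> {in s, forall y, ~~ lt r' y} -> r = r'.
Proof.
move=> rs r's r_max r'_max; apply/eqP/negPn/negP => /lt_total/orP[].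
  by apply/negP/r_max.
by apply/negP/r'_max.
Qed.

End FoldlArgmax.

Section TermOrder.
Variables (K : fieldType) (R : realDomainType) (val : K -> R) (n : nat)
  (w : 'I_n -> R) (le1 : rel 'X_{1..n}).
Hypothesis Hval : is_valuation val.
Hypothesis Hle1 : is_monomial_order le1.

Lemma term_ltxx a m : term_lt val w le1 a m a m = false.
Proof. by rewrite /term_lt ltnn ltxx !eqxx /= andbF. Qed.

Lemma term_lt_trans a1 m1 a2 m2 a3 m3 :
  term_lt val w le1 a1 m1 a2 m2 -> term_lt val w le1 a2 m2 a3 m3 ->
  term_lt val w le1 a1 m1 a3 m3.
Proof.
case: Hle1 => _ [le1_anti [le1_trans _]]; rewrite /term_lt.
move: (mdeg m1) (mdeg m2) (mdeg m3) (val a1 + _) (val a2 + _) (val a3 + _).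
move=> d1 d2 d3 v1 v2 v3.
case/or3P => [lt12|/andP[/eqP<- lt21]|/and4P[/eqP<- /eqP<- le12 ne12]];
case/or3P => [lt23|/andP[/eqP<- lt32]|/and4P[/eqP<- /eqP<- le23 ne23]];
  rewrite ?(ltn_trans lt12 lt23) ?lt12 ?lt23 ?eqxx ?(lt_trans lt32 lt21) ?lt21 ?lt32
    ?orbT //=.
rewrite ltnn ltxx (le1_trans _ _ _ le12 le23) /=.
by apply: contra ne12 => /eqP e13; rewrite -e13 in le23; rewrite (le1_anti _ _ le12 le23).
Qed.

Lemma term_lt_total a1 m1 a2 m2 : m1 != m2 ->
  term_lt val w le1 a1 m1 a2 m2 || term_lt val w le1 a2 m2 a1 m1.
Proof.
case: Hle1 => _ [_ [_ [le1_total _]]] ne12; rewrite /term_lt.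
case: (ltngtP (mdeg m1) (mdeg m2)) => //= _.
case: (ltgtP (val a1 + wdot w m1) (val a2 + wdot w m2)) => //= _.
rewrite ne12 eq_sym ne12 !andbT /=.
by case/orP: (le1_total m1 m2) => ->; rewrite ?orbT.
Qed.

Lemma term_ltZ k a1 m1 a2 m2 : k != 0 -> a1 != 0 -> a2 != 0 ->
  term_lt val w le1 (k * a1) m1 (k * a2) m2 = term_lt val w le1 a1 m1 a2 m2.
Proof.
case: Hval => val_mul _ nzk nza1 nza2.
by rewrite /term_lt !val_mul // -!addrA ltrD2l (inj_eq (addrI _)).
Qed.

Definition coef_term_lt (p : {mpoly K[n]}) : rel 'X_{1..n} :=
  fun m1 m2 => term_lt val w le1 p@_m1 m1 p@_m2 m2.

Lemma coef_term_lt_total p m1 m2 :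
  m1 != m2 -> coef_term_lt p m1 m2 || coef_term_lt p m2 m1.
Proof. exact: term_lt_total. Qed.

Lemma LM_greatest p : p != 0 -> LM val w le1 p \in msupp p /\
  {in msupp p, forall m, ~~ coef_term_lt p (LM val w le1 p) m}.
Proof.
rewrite -msupp_eq0 /LM; case: (msupp p) => // m0 s _ /=; rewrite term_ltxx.
apply: (foldl_argmax _ _ (@coef_term_lt_total p)) => [m|m2 m1 m3]; first exact: term_ltxx.
exact: term_lt_trans.
Qed.

Lemma LM_scale k p : k != 0 -> LM val w le1 (k *: p) = LM val w le1 p.
Proof.
move=> nzk; have [->|nzp] := eqVneq p 0; first by rewrite scaler0.
have nzkp : k *: p != 0 by rewrite scaler_eq0 negb_or nzk.
have msuppZ_mem : msupp (k *: p) =i msupp p by apply/perm_mem/msuppZ.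
have coef_term_ltZ : {in msupp p &, coef_term_lt (k *: p) =2 coef_term_lt p}.
  by move=> m1 m2 /[!mcoeff_msupp] nz1 nz2; rewrite /coef_term_lt !mcoeffZ term_ltZ.
have [kp_in kp_max] := LM_greatest nzkp; have [p_in p_max] := LM_greatest nzp.
rewrite msuppZ_mem in kp_in.
apply: (@argmax_uniq _ (coef_term_lt p)) p_max => //.
  exact: coef_term_lt_total.
by move=> m mp; rewrite -coef_term_ltZ // kp_max // msuppZ_mem.
Qed.

End TermOrder.

Section DegreeRefiningOrder.
Variables (n : nat) (le : rel 'X_{1..n}).
Hypotheses (le_order : is_monomial_order le) (le_refine : degree_refining le).

Lemma degree_refining_min (P : 'X_{1..n} -> Prop) :
  (exists m, P m) -> exists2 m, P m & forall m', P m' -> le m m'.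
Proof.
case: le_order => le_refl [_ [le_trans [le_total _]]].
move=> /(ex_min_key mdeg) [m0 Pm0 m0_min].
(* Among monomials of the least degree, compare positions in the le-sorted enumeration. *)
pose mons := map (@bmnm n (mdeg m0).+1) (enum {: 'X_{1..n < (mdeg m0).+1}}).
pose srt := sort le mons.
have in_srt m : mdeg m = mdeg m0 -> m \in srt.
  move=> dm; have lt_d : (mdeg m < (mdeg m0).+1)%N by rewrite dm.
  by rewrite mem_sort; apply/mapP; exists (BMultinom lt_d); rewrite ?mem_enum.
have [m [Pm dm] m_min] := ex_min_key (fun m => index m srt)
  (ex_intro (fun m => P m /\ mdeg m = mdeg m0) m0 (conj Pm0 erefl)).
exists m => // m' Pm'.
have [lt_deg|le_deg] := ltnP (mdeg m0) (mdeg m'); first by apply: le_refine; rewrite dm.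
have dm' : mdeg m' = mdeg m0 by apply/eqP; rewrite eqn_leq le_deg m0_min.
apply: (sorted_leq_index (fun y x z => le_trans x y z) le_refl (sort_sorted le_total mons));
  by rewrite ?in_srt // m_min.
Qed.
End DegreeRefiningOrder.

Section Signature.
Variables (K : fieldType) (R : realDomainType) (val : K -> R) (n : nat)
  (w : 'I_n -> R) (le1 : rel 'X_{1..n}) (s : nat) (F : 'I_s -> {mpoly K[n]})
  (lem : rel 'X_{1..n}).
Hypothesis Hlem : is_monomial_order lem.
Hypothesis Hlem_deg : degree_refining lem.

Local Notation sign_le := (sign_le val w le1 F lem).
Local Notation sign_lt := (sign_lt val w le1 F lem).
Local Notation in_I_le := (in_I_le val w le1 F lem).
Local Notation is_signature := (is_signature val w le1 F lem).
Local Notation in_LMT m i := (in_LMTSyz val w le1 F (mono_e K m i)).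

Lemma sign_le_trans a i b j c k :
  sign_le a i b j -> sign_le b j c k -> sign_le a i c k.
Proof.
case: Hlem => _ [_ [lem_trans _]].
move=> [lt_ij|[<- [lt_ab|[eq_ab tie_ab]]]] [lt_jk|[<- [lt_bc|[eq_bc tie_bc]]]];
  do ?[by left; apply: ltn_trans lt_jk];
  do ?[by left]; right; split=> //.
- by left; apply: ltn_trans lt_bc.
- by left; rewrite -eq_bc.
- by left; rewrite eq_ab.
- right; split; first by rewrite eq_ab.
  have := lem_trans a b c; clear -tie_ab tie_bc; tauto.
Qed.

Lemma sign_le_total a i b j : sign_le a i b j \/ sign_le b j a i.
Proof.
case: Hlem => _ [_ [_ [lem_total _]]].
case: (ltngtP i j) => [lt_ij|lt_ji|/val_inj <-]; [by left; left|by right; left|].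
case: (ltngtP (msize ('X_[a] * F i)) (msize ('X_[b] * F i))) => [lt_ab|lt_ba|eq_ab].
- by left; right; split=> //; left.
- by right; right; split=> //; left.
have [ILa|ILa] := pselect (in_LMT a i); have [ILb|ILb] := pselect (in_LMT b i);
  case/orP: (lem_total a b) => [le_ab|le_ba];
  first [left; right; split=> //; right; split=> //; tauto
        |right; right; split=> //; right; split=> //; tauto].
Qed.

Lemma sign_le_anti a i b j : sign_le a i b j -> sign_le b j a i -> a = b /\ i = j.
Proof.
case: Hlem => _ [lem_anti _].
move=> [lt_ij|[eq_ij le_ab]] [lt_ji|[eq_ji le_ba]].
- by move: (ltn_trans lt_ij lt_ji); rewrite ltnn.
- by move: lt_ij; rewrite eq_ji ltnn.
- by move: lt_ji; rewrite eq_ij ltnn.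
split=> //; subst j.
case: le_ab => [lt_ab|[eq_ab tie_ab]]; case: le_ba => [lt_ba|[eq_ba tie_ba]].
- by move: (ltn_trans lt_ab lt_ba); rewrite ltnn.
- by move: lt_ab; rewrite eq_ba ltnn.
- by move: lt_ba; rewrite eq_ab ltnn.
apply: lem_anti; clear -tie_ab tie_ba; tauto.
Qed.

Lemma sign_lt_nle a i b j : sign_lt a i b j -> ~ sign_le b j a i.
Proof.
by move=> [le_ab ne_ab] /(sign_le_anti le_ab) [eq_ab eq_ij]; rewrite eq_ab eq_ij in ne_ab.
Qed.

Lemma sign_le_lt_trans a i b j c k :
  sign_le a i b j -> sign_lt b j c k -> sign_lt a i c k.
Proof.
move=> le_ab [le_bc ne_bc]; split; first exact: sign_le_trans le_bc.
move=> /pair_equal_spec[eq_ac eq_ik]; rewrite -eq_ac -eq_ik in le_bc ne_bc.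
by apply: ne_bc; case: (sign_le_anti le_bc le_ab) => -> ->.
Qed.

Lemma sign_le_min (P : 'X_{1..n} -> 'I_s -> Prop) : (exists m i, P m i) ->
  exists m i, P m i /\ forall m' j, P m' j -> sign_le m i m' j.
Proof.
move=> [m1 [i1 Pm1]].
(* Minimize, in this order, the index i, the size of x^m f_i, membership of x^m e_i in
   LM(TSyz(F)) (non-members first), and finally m along lem. *)
have [[m0 i] /= Pm0 i_min] := ex_min_key (fun x : 'X_{1..n} * 'I_s => nat_of_ord x.2)
  (ex_intro (fun x => P x.1 x.2) (m1, i1) Pm1).
pose sz m := msize ('X_[m] * F i).
have [m2 Pm2 sz_min] := ex_min_key sz (ex_intro (fun m => P m i) m0 Pm0).
pose inL m := `[< in_LMT m i >].
have [m3 [Pm3 szm3] inL_min] := ex_min_key (fun m => nat_of_bool (inL m))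
  (ex_intro (fun m => P m i /\ sz m = sz m2) m2 (conj Pm2 erefl)).
have [m [[Pm szm] inLm] lem_min_m] := degree_refining_min Hlem Hlem_deg
  (ex_intro (fun m => (P m i /\ sz m = sz m2) /\ inL m = inL m3) m3
    (conj (conj Pm3 szm3) erefl)).
exists m, i; split=> // m' j Pm'.
have [lt_ij|le_ji] := ltnP i j; first by left.
have eq_ij : i = j by apply/val_inj/eqP; rewrite eqn_leq le_ji (i_min (m', j)).
subst j.
right; split=> //.
have [lt_sz|le_sz] := ltnP (sz m) (sz m'); first by left.
have eq_sz : sz m' = sz m2 by apply/eqP; rewrite eqn_leq sz_min // andbT -szm.
right; split; first by rewrite -/(sz m) -/(sz m') szm eq_sz.
have lem_mm' : inL m' = inL m -> lem m m'.
  by move=> eq_inL; apply: lem_min_m; rewrite eq_inL inLm.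
have := inL_min m' (conj Pm' eq_sz); rewrite -inLm /inL in lem_mm' *.
case: (asboolP (in_LMT m i)) lem_mm' => ILm;
  case: (asboolP (in_LMT m' i)) => ILm' //= lem_mm' _.
- by right; left; split=> //; split=> //; apply: lem_mm'.
- by left.
- by right; right; split=> //; split=> //; apply: lem_mm'.
Qed.

Lemma signature_exists h b j : in_I_le h b j -> exists al i, is_signature h al i.
Proof. by move=> h_in; apply: sign_le_min; exists b, j. Qed.

(* [in_I_le h al i] is convertible to [in_span (fun b j => sign_le b j al i) h]. *)
Definition in_span (P : 'X_{1..n} -> 'I_s -> Prop) (h : {mpoly K[n]}) : Prop :=
  exists l : seq (K * ('X_{1..n} * 'I_s)),
    (forall t, t \in l -> P t.2.1 t.2.2) /\
    h = \sum_(t <- l) t.1 *: ('X_[t.2.1] * F t.2.2).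

Lemma in_spanZ P c h : in_span P h -> in_span P (c *: h).
Proof.
move=> [l [l_P ->]]; exists [seq (c * t.1, t.2) | t <- l]; split.
  by move=> _ /mapP [t t_in ->]; apply: (l_P t t_in).
by rewrite big_map scaler_sumr; apply: eq_bigr => t _; rewrite scalerA.
Qed.

Lemma in_spanD P h1 h2 : in_span P h1 -> in_span P h2 -> in_span P (h1 + h2).
Proof.
move=> [l1 [l1_P ->]] [l2 [l2_P ->]]; exists (l1 ++ l2); split; last by rewrite big_cat.
by move=> t; rewrite mem_cat => /orP[/l1_P|/l2_P].
Qed.

Lemma in_I_le_split h al i : in_I_le h al i -> exists c h',
  in_span (fun b j => sign_lt b j al i) h' /\ h = c *: ('X_[al] * F i) + h'.
Proof.
move=> [l [l_le ->]]; pose top (t : K * ('X_{1..n} * 'I_s)) := t.2 == (al, i).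
exists (\sum_(t <- l | top t) t.1), (\sum_(t <- l | ~~ top t) t.1 *: ('X_[t.2.1] * F t.2.2)).
split; last first.
  rewrite (bigID top) /= scaler_suml; congr (_ + _).
  by apply: eq_bigr => t /eqP ->.
exists [seq t <- l | ~~ top t]; split; last by rewrite big_filter.
move=> t; rewrite mem_filter => /andP[not_top t_in]; split; first exact: l_le.
by move=> eq_t; rewrite /top -eq_t -surjective_pairing eqxx in not_top.
Qed.

Lemma signature_lt_of_span h al i :
  h != 0 -> in_span (fun b j => sign_lt b j al i) h ->
  exists b j, is_signature h b j /\ sign_lt b j al i.
Proof.
move=> nz_h [l [l_lt h_def]].
have l_nil : map snd l != [::].
  by apply: contraNneq nz_h; rewrite h_def; case: l {h_def l_lt} => // _; rewrite big_nil.
have [[b j] bj_in bj_max] := seq_greatest (fun x y => sign_le_total x.1 x.2 y.1 y.2)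
  (fun x y z => @sign_le_trans x.1 x.2 y.1 y.2 z.1 z.2) l_nil.
have h_le : in_I_le h b j.
  by exists l; split=> [t t_in|]; first exact: (bj_max t.2 (map_f _ t_in)).
have [b' [j' sig_b']] := signature_exists h_le.
exists b', j'; split=> //; apply: sign_le_lt_trans (sig_b'.2 _ _ h_le) _.
by have /mapP [[c [b0 j0]] t_in [-> ->]] := bj_in; apply: (l_lt _ t_in).
Qed.

Lemma signature_split h al i : h != 0 -> is_signature h al i ->
  exists c h', [/\ c != 0, in_span (fun b j => sign_lt b j al i) h' &
    h = c *: ('X_[al] * F i) + h'].
Proof.
move=> nz_h [h_le al_min]; have [c [h' [h'_lt h_def]]] := in_I_le_split h_le.
exists c, h'; split=> //; apply/eqP => c0.
rewrite h_def c0 scale0r add0r in nz_h al_min.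
have [b [j [[h_le' _] lt_bj]]] := signature_lt_of_span nz_h h'_lt.
exact: sign_lt_nle lt_bj (al_min _ _ h_le').
Qed.

End Signature.

Theorem mainTheorem3
  (K : fieldType) (R : realDomainType) (val : K -> R) (n : nat)
  (w : 'I_n -> R) (le1 lem : rel 'X_{1..n}) (s : nat) (F : 'I_s -> {mpoly K[n]})
  (Hval : is_valuation val)
  (Hw : forall i : 'I_n, exists c : K, c != 0 /\ val c = w i)
  (Hle1 : is_monomial_order le1)
  (Hlem : is_monomial_order lem) (Hlem_deg : degree_refining lem)
  (HF : forall i j : 'I_s, (i <= j)%N -> (msize (F i) <= msize (F j))%N)
  (f g : {mpoly K[n]}) (al : 'X_{1..n}) (i : 'I_s) :
  in_ideal F f -> in_ideal F g -> f != 0 -> g != 0 ->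
  is_signature val w le1 F lem f al i ->
  is_signature val w le1 F lem g al i ->
  LM val w le1 f != LM val w le1 g ->
  exists a b : K, [/\ a != 0, b != 0, a *: f + b *: g != 0 &
    exists (be : 'X_{1..n}) (j : 'I_s),
      is_signature val w le1 F lem (a *: f + b *: g) be j /\
      sign_lt val w le1 F lem be j al i].
Proof.
move=> _ _ nz_f nz_g sig_f sig_g ne_LM.
have [cf [f' [nz_cf f'_lt f_def]]] := signature_split Hlem Hlem_deg nz_f sig_f.
have [cg [g' [nz_cg g'_lt g_def]]] := signature_split Hlem Hlem_deg nz_g sig_g.
have nz_h : cg *: f + - cf *: g != 0.
  rewrite scaleNr subr_eq0; apply: contraNneq ne_LM => eq_fg.
  by rewrite -(LM_scale w Hval Hle1 _ nz_cg) eq_fg (LM_scale w Hval Hle1 _ nz_cf).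
have h_lt : in_span F (fun b j => sign_lt val w le1 F lem b j al i) (cg *: f + - cf *: g).
  have -> : cg *: f + - cf *: g = cg *: f' + - cf *: g'.
    by rewrite f_def g_def !scaleNr !scalerDr !scalerA mulrC opprD addrACA subrr add0r.
  by apply: in_spanD; apply: in_spanZ.
exists cg, (- cf); split=> //; first by rewrite oppr_eq0.
exact: (signature_lt_of_span Hlem Hlem_deg nz_h h_lt).
Qed.
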